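(* Suppose $(B,b)$ is a type (2) Whitehead automorphism and $a\in L$ satisfies $a\ge b$ and $a,a^{-1}\notin B$. Suppose $[u]$ is an element or a conjugacy class of $A_\Gamma$ with $\bar b\notin\mathrm{supp}[u]$, and $v$ is a graphically reduced word (respectively cyclic word) representing $(B,b)([u])$. Let $v'$ be obtained from $v$ by replacing every occurrence of $b$ by $a$ and every occurrence of $b^{-1}$ by $a^{-1}$. Then $v'$ represents $((B\setminus\{b\})\cup\{a\},a)([u])$.
   Context: $\Gamma$ is a finite simplicial graph with vertex set $X$, $A_\Gamma$ its right-angled Artin group, $L=X\cup X^{-1}$, $\bar u$ the vertex of a letter $u$, $\mathrm{lk}(v)$ neighbours, $\mathrm{st}(v)=\mathrm{lk}(v)\cup\{v\}$; domination $v\ge w$ iff $\mathrm{lk}(w)\subset\mathrm{st}(v)$, extended to letters via vertices. For $a\in A\subset L$ with $a^{-1}\notin A$, $(A,a)$ denotes the map fixing $a$ and sending $x\in L\setminus\{a^{\pm1}\}$ to $a^{-\epsilon}xa^{\delta}$ where $\delta=1$ if $x\in A$ (else $0$) and $\epsilon=1$ if $x^{-1}\in A$ (else $0$); a type (2) Whitehead automorphism is such a map that is an automorphism of $A_\Gamma$. Under the hypotheses of the claim, $((B\setminus\{b\})\cup\{a\},a)$ is also a well-defined automorphism. A word (cyclic word) is graphically reduced if it has minimal length among words representing the same element (conjugacy class). The support of an element/conjugacy class is the set of vertices occurring in a graphically reduced representative. *)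

From mathcomp Require Import all_boot.
Set Implicit Arguments. Unset Strict Implicit. Unset Printing Implicit Defensive.

Section RAAG.
Variables (V : finType) (adj : rel V).

(* letters L = X u X^{-1}: (x, false) = x, (x, true) = x^{-1} *)
Definition letter := (V * bool)%type.
Definition linv (x : letter) : letter := (x.1, ~~ x.2).
Definition word := seq letter.
Definition winv (w : word) : word := rev (map linv w).

(* equality in A_Gamma: congruence generated by free cancellation and
   commutation of letters with adjacent vertices *)
Inductive wequiv : word -> word -> Prop :=
| we_refl w : wequiv w w
| we_sym w1 w2 : wequiv w1 w2 -> wequiv w2 w1
| we_trans w1 w2 w3 : wequiv w1 w2 -> wequiv w2 w3 -> wequiv w1 w3
| we_cancel p s x : wequiv (p ++ x :: linv x :: s) (p ++ s)
| we_comm p s x y : adj x.1 y.1 -> wequiv (p ++ x :: y :: s) (p ++ y :: x :: s).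

Definition wconj (w1 w2 : word) : Prop :=
  exists g : word, wequiv (g ++ w1 ++ winv g) w2.

Definition greduced (w : word) : Prop :=
  forall w', wequiv w' w -> size w <= size w'.
Definition cgreduced (w : word) : Prop :=
  forall w', wconj w' w -> size w <= size w'.

Definition occurs (x : V) (w : word) : bool := x \in map fst w.

Definition supp_el (w : word) (x : V) : Prop :=
  exists w', [/\ wequiv w' w, greduced w' & occurs x w'].
Definition supp_cl (w : word) (x : V) : Prop :=
  exists w', [/\ wconj w' w, cgreduced w' & occurs x w'].

Definition wext (f : letter -> word) (w : word) : word := flatten (map f w).

Definition respects (f : letter -> word) : Prop :=
  forall w1 w2, wequiv w1 w2 -> wequiv (wext f w1) (wext f w2).

Definition is_aut (f : letter -> word) : Prop :=
  respects f /\ exists g : letter -> word, respects g /\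
    forall x, wequiv (wext g (f x)) [:: x] /\ wequiv (wext f (g x)) [:: x].

Definition whmap (A : {set letter}) (a : letter) (x : letter) : word :=
  if (x == a) || (x == linv a) then [:: x]
  else (if linv x \in A then [:: linv a] else [::]) ++
       x :: (if x \in A then [:: a] else [::]).

Definition whitehead2 (A : {set letter}) (a : letter) : Prop :=
  [/\ a \in A, linv a \notin A & is_aut (whmap A a)].

(* domination v >= w iff lk(w) subset st(v) *)
Definition dominates (v w : V) : Prop :=
  forall z, adj w z -> adj v z || (z == v).

Definition replace_letter (b a : letter) (w : word) : word :=
  map (fun x => if x == b then a else if x == linv b then linv a else x) w.

End RAAG.

(* Write f = (B, b), f' = (B', a) with B' = (B - b) + a, and r for the
   substitution b -> a, b^-1 -> a^-1.  Since a >= b, r is an endomorphism of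
   A_Gamma, and on letters off the vertex of b one has f' = r o f.  As the vertex
   of b is not in the support of [u], [u] has a representative w avoiding it, so
   r(v) represents r(f(w)) = f'(w).  What remains is that f' is well defined;
   when a and b do not commute this needs, for y adjacent to a, that y and y^-1
   lie in B together or not at all, which follows from f respecting [a, y] = 1
   because letters at distinct non-adjacent vertices never commute. *)

From Stdlib Require Import Classical.
From mathcomp Require Import all_boot.
Set Implicit Arguments. Unset Strict Implicit. Unset Printing Implicit Defensive.

Lemma exists_min_size (T : Type) (P : T -> Prop) (m : T -> nat) :
  (exists x, P x) -> exists x, P x /\ forall y, P y -> m x <= m y.
Proof.
move=> [x Px].
suff: forall n x, P x -> m x < n -> exists x, P x /\ forall y, P y -> m x <= m y.
  by move=> /(_ (m x).+1 x Px (ltnSn _)).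
elim=> [y _|n IH y Py lt]; first by rewrite ltn0.
case: (classic (exists z, P z /\ m z < m y)) => [[z [Pz lt']]|nlt].
  by apply: (IH z) => //; exact: leq_trans lt' lt.
exists y; split=> // z Pz; rewrite leqNgt; apply/negP => lt'; apply: nlt; by exists z.
Qed.

Section Letters.
Variable V : finType.

Lemma linvK : involutive (@linv V).
Proof. by case=> v c; rewrite /linv /= negbK. Qed.

Lemma linv_neq (x : letter V) : linv x != x.
Proof. by case: x => v []; rewrite /linv; apply/eqP => -[]. Qed.

Lemma same_vertex (x y : letter V) : x.1 = y.1 -> y = x \/ y = linv x.
Proof. by case: x y => [v c] [w d] /= ->; rewrite /linv; case: c; case: d; auto. Qed.

Lemma winv_cons x (w : word V) : winv (x :: w) = winv w ++ [:: linv x].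
Proof. by rewrite /winv /= rev_cons cats1. Qed.

Lemma winv_cat (w1 w2 : word V) : winv (w1 ++ w2) = winv w2 ++ winv w1.
Proof. by rewrite /winv map_cat rev_cat. Qed.

Lemma winvK : involutive (@winv V).
Proof.
move=> w; rewrite /winv map_rev revK -map_comp (eq_map (g := id)) ?map_id //.
exact: linvK.
Qed.

Lemma wext_cat (g : letter V -> word V) w1 w2 :
  wext g (w1 ++ w2) = wext g w1 ++ wext g w2.
Proof. by rewrite /wext map_cat flatten_cat. Qed.

Lemma wext_letter (g : letter V -> letter V) w : wext (fun x => [:: g x]) w = map g w.
Proof. by rewrite /wext; elim: w => //= x w ->. Qed.

Lemma wext_winv (g : letter V -> word V) :
  (forall x, g (linv x) = winv (g x)) -> forall w, wext g (winv w) = winv (wext g w).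
Proof.
move=> gV; elim=> // x w IH.
by rewrite winv_cons wext_cat IH /wext /= cats0 gV -/(wext g w) winv_cat.
Qed.

End Letters.
Arguments linvK {V}.

Section Words.
Variables (V : finType) (adj : rel V).
Local Notation weq := (wequiv adj).

Lemma wequiv_ctx p s w1 w2 : weq w1 w2 -> weq (p ++ w1 ++ s) (p ++ w2 ++ s).
Proof.
elim=> {w1 w2} [w|w1 w2 _ IH|w1 w2 w3 _ IH1 _ IH2|p' s' x|p' s' x y xy].
- exact: we_refl.
- exact: we_sym.
- exact: we_trans IH1 IH2.
- by move: (we_cancel adj (p ++ p') (s' ++ s) x); rewrite -!catA.
- by move: (we_comm (p ++ p') (s' ++ s) xy); rewrite -!catA.
Qed.

Lemma wequiv_cat w1 w2 w3 w4 : weq w1 w2 -> weq w3 w4 -> weq (w1 ++ w3) (w2 ++ w4).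
Proof.
move=> e12 e34; apply: (we_trans (w2 := w2 ++ w3)).
  exact: (wequiv_ctx [::] w3 e12).
by move: (wequiv_ctx w2 [::] e34); rewrite !cats0.
Qed.

Lemma wequiv_cat_winv w : weq (w ++ winv w) [::].
Proof.
elim: w => [|x w IH]; first exact: we_refl.
rewrite winv_cons /= catA; apply: we_trans (we_cancel adj [::] [::] x).
by move: (wequiv_ctx [:: x] [:: linv x] IH); rewrite -!catA.
Qed.

Lemma wequiv_winv_cat w : weq (winv w ++ w) [::].
Proof. by move: (wequiv_cat_winv (winv w)); rewrite winvK. Qed.

Lemma wequiv_cancell p w1 w2 : weq (p ++ w1) (p ++ w2) -> weq w1 w2.
Proof.
have cancel w : weq ((winv p ++ p) ++ w) w.
  exact: (wequiv_cat (wequiv_winv_cat p) (we_refl adj w)).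
move=> e; apply: we_trans (cancel w2); apply: we_trans (we_sym (cancel w1)) _.
by rewrite -!catA; apply: wequiv_cat (we_refl adj _) e.
Qed.

Lemma wequiv_cancelr s w1 w2 : weq (w1 ++ s) (w2 ++ s) -> weq w1 w2.
Proof.
have cancel w : weq (w ++ s ++ winv s) w.
  by move: (wequiv_cat (we_refl adj w) (wequiv_cat_winv s)); rewrite cats0.
move=> e; apply: we_trans (cancel w2); apply: we_trans (we_sym (cancel w1)) _.
by rewrite !catA; apply: wequiv_cat e (we_refl adj _).
Qed.

Lemma wequiv_comm_vertex (x y : letter V) : x.1 = y.1 -> weq [:: x; y] [:: y; x].
Proof.
case/same_vertex => ->; first exact: we_refl.
apply: we_trans (we_cancel adj [::] [::] x) _.
by apply: we_sym; move: (we_cancel adj [::] [::] (linv x)); rewrite linvK.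
Qed.

Lemma wequiv_comm_word x (w : word V) :
  (forall z, z \in w -> adj x.1 z.1) -> weq (x :: w) (w ++ [:: x]).
Proof.
elim: w => [|y w IH] xw /=; first exact: we_refl.
apply: we_trans (we_comm [::] w (xw y (mem_head _ _))) _.
apply: (wequiv_cat (w1 := [:: y]) (we_refl adj _)).
by apply: IH => z zw; apply: xw; rewrite inE zw orbT.
Qed.

Lemma wconj_refl w : wconj adj w w.
Proof. by exists [::]; rewrite /= cats0; apply: we_refl. Qed.

Lemma wconj_trans w1 w2 w3 : wconj adj w1 w2 -> wconj adj w2 w3 -> wconj adj w1 w3.
Proof.
case=> g1 e1 [g2 e2]; exists (g2 ++ g1); apply: we_trans e2.
by move: (wequiv_ctx g2 (winv g2) e1); rewrite winv_cat -!catA.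
Qed.

Lemma wconj_sym w1 w2 : wconj adj w1 w2 -> wconj adj w2 w1.
Proof.
case=> g e; exists (winv g); rewrite winvK; apply: (wequiv_cancell (p := g)).
apply: (wequiv_cancelr (s := winv g)); rewrite -!catA; apply: we_trans _ (we_sym e).
rewrite catA; apply: we_trans (wequiv_cat (wequiv_cat_winv g) (we_refl adj _)) _.
by move: (wequiv_cat (we_refl adj w2) (wequiv_cat_winv g)); rewrite cats0.
Qed.

Lemma respects_wext (g : letter V -> word V) :
  (forall x, g (linv x) = winv (g x)) ->
  (forall x y, adj x.1 y.1 -> weq (g x ++ g y) (g y ++ g x)) -> respects adj g.
Proof.
move=> gV gC w1 w2.
elim=> {w1 w2} [w|w1 w2 _ IH|w1 w2 w3 _ IH1 _ IH2|p s x|p s x y xy].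
- exact: we_refl.
- exact: we_sym.
- exact: we_trans IH1 IH2.
- rewrite !wext_cat /wext /= -/(wext g s) catA gV.
  by move: (wequiv_ctx (wext g p) (wext g s) (wequiv_cat_winv (g x))); rewrite !catA.
- rewrite !wext_cat /wext /= -/(wext g s) !catA.
  by move: (wequiv_ctx (wext g p) (wext g s) (gC _ _ xy)); rewrite !catA.
Qed.

Lemma wconj_wext (g : letter V -> word V) w1 w2 :
  (forall x, g (linv x) = winv (g x)) -> respects adj g ->
  wconj adj w1 w2 -> wconj adj (wext g w1) (wext g w2).
Proof.
move=> gV gR [h e]; exists (wext g h).
by rewrite -wext_winv // -!wext_cat; apply: gR.
Qed.

End Words.

Lemma exists_shortest_repr (V : finType) (R : word V -> word V -> Prop) u :
  R u u -> (forall w1 w2 w3, R w1 w2 -> R w2 w3 -> R w1 w3) ->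
  exists w0, R w0 u /\ forall w, R w w0 -> size w0 <= size w.
Proof.
move=> Ru Rtr; have [w0 [Rw0 min]] := exists_min_size size (ex_intro (R^~ u) u Ru).
by exists w0; split=> // w Rw; apply: min; apply: Rtr Rw Rw0.
Qed.

Section NonCommuting.
Variables (V : finType) (adj : rel V) (p q : V).
Hypotheses (adj_sym : symmetric adj) (pq : p != q) (npq : ~~ adj p q).

(* An action of A_Gamma on nat, well defined as p and q are not adjacent, in
   which letters at p and q act by the non-commuting transpositions (0 1), (1 2). *)
Definition swap_action (x : letter V) (n : nat) : nat :=
  if x.1 == p then (if n == 0 then 1 else if n == 1 then 0 else n)
  else if x.1 == q then (if n == 1 then 2 else if n == 2 then 1 else n)
  else n.

Lemma swap_actionK x : cancel (swap_action (linv x)) (swap_action x).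
Proof.
rewrite /swap_action /= => n.
by case: (x.1 == p); case: (x.1 == q); case: n => [|[|[|n]]].
Qed.

Lemma swap_action_comm x y : adj x.1 y.1 ->
  swap_action x \o swap_action y =1 swap_action y \o swap_action x.
Proof.
move=> xy n; rewrite /swap_action /=.
have nqp : ~~ adj q p by rewrite adj_sym.
case: (eqVneq x.1 p) => xp; case: (eqVneq y.1 p) => yp;
case: (eqVneq x.1 q) => xq; case: (eqVneq y.1 q) => yq => //.
all: try by move: pq; rewrite -?xp -?yp ?xq ?yq eqxx.
all: by move: xy; rewrite ?xp ?yp ?xq ?yq ?(negbTE npq) ?(negbTE nqp).
Qed.

Lemma swap_action_wequiv w1 w2 : wequiv adj w1 w2 ->
  foldr swap_action 0 w1 = foldr swap_action 0 w2.
Proof.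
move=> e; elim: e 0 => {w1 w2} [w|w1 w2 _ IH|w1 w2 w3 _ IH1 _ IH2|s t x|s t x y xy] n.
- by [].
- by rewrite IH.
- by rewrite IH1 IH2.
- by rewrite !foldr_cat /= -{2}[x]linvK swap_actionK.
- by rewrite !foldr_cat /=; have /= -> := swap_action_comm xy (foldr swap_action n t).
Qed.

Lemma not_wequiv_comm (x z : letter V) : x.1 = p -> z.1 = q ->
  ~ wequiv adj [:: x; z] [:: z; x].
Proof.
move=> xp zq /swap_action_wequiv; rewrite /= /swap_action xp zq eqxx.
by rewrite /= [q == p]eq_sym (negbTE pq) eqxx.
Qed.

End NonCommuting.

Section WhiteheadMap.
Variables (V : finType) (A : {set letter V}) (c : letter V).
Local Notation f := (whmap A c).

Lemma whmap_linv x : f (linv x) = winv (f x).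
Proof.
have fixed y : (y == c) || (y == linv c) = (linv y == c) || (linv y == linv c).
  by rewrite (inv_eq linvK) [linv y == _](inv_eq linvK) linvK orbC.
rewrite /whmap linvK -fixed; case: ifP => _ //.
by case: (x \in A); case: (linv x \in A); rewrite /winv /= ?linvK.
Qed.

Lemma whmap_vertex y z : z \in f y -> z.1 = c.1 \/ z = y.
Proof.
rewrite /whmap; case: ifP => _; first by rewrite inE => /eqP; right.
by rewrite mem_cat !inE; do 2!case: ifP => _; rewrite ?inE;
  case/orP => [|/orP[|]] // /eqP ->; auto.
Qed.

Lemma whmap_fix x : x.1 = c.1 -> f x = [:: x].
Proof. by case/esym/same_vertex => ->; rewrite /whmap eqxx ?orbT. Qed.

Lemma whmap_id x : x \notin A -> linv x \notin A -> f x = [:: x].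
Proof. by move=> /negbTE xA /negbTE xA'; rewrite /whmap xA xA'; case: ifP. Qed.

Lemma whmap_other x : x.1 != c.1 ->
  f x = (if linv x \in A then [:: linv c] else [::]) ++
        x :: (if x \in A then [:: c] else [::]).
Proof.
move=> xc; rewrite /whmap; case: ifP => // /orP[] /eqP e.
  by rewrite e eqxx in xc.
by rewrite e /= eqxx in xc.
Qed.

End WhiteheadMap.

Section Replacement.
Variables (V : finType) (adj : rel V).
Hypotheses (adj_sym : symmetric adj) (adj_irr : irreflexive adj).
Variables (b a : letter V).
Hypothesis dom : dominates adj a.1 b.1.

Definition replace1 (x : letter V) : letter V :=
  if x == b then a else if x == linv b then linv a else x.

Lemma replace_letterE w : replace_letter b a w = wext (fun x => [:: replace1 x]) w.
Proof. by rewrite wext_letter. Qed.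

Lemma replace1_id x : x.1 != b.1 -> replace1 x = x.
Proof.
move=> xb; rewrite /replace1; case: ifP => [/eqP e|_]; first by rewrite e eqxx in xb.
by case: ifP => // /eqP e; rewrite e eqxx in xb.
Qed.

Lemma replace1_vertex x : x.1 = b.1 -> (replace1 x).1 = a.1.
Proof. by case/esym/same_vertex => ->; rewrite /replace1 ?eqxx ?(negbTE (linv_neq b)). Qed.

Lemma replace1_linv x : replace1 (linv x) = linv (replace1 x).
Proof.
rewrite /replace1 (inv_eq linvK) [linv x == _](inv_eq linvK) linvK.
case: (eqVneq x b) => [->|_]; first by rewrite eq_sym (negbTE (linv_neq b)).
by case: ifP; rewrite ?linvK.
Qed.

Lemma replace1_comm_b x y : adj x.1 y.1 -> x.1 = b.1 ->
  wequiv adj [:: replace1 x; replace1 y] [:: replace1 y; replace1 x].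
Proof.
move=> xy xb; have yb : y.1 != b.1 by apply: contraTneq xy => ->; rewrite xb adj_irr.
rewrite (replace1_id yb); have ax := replace1_vertex xb.
move: (xy); rewrite xb => /dom /orP[ay|/eqP ya].
  by apply: (we_comm [::] [::]); rewrite ax.
by apply: wequiv_comm_vertex; rewrite ax ya.
Qed.

Lemma replace1_respects : respects adj (fun x => [:: replace1 x]).
Proof.
apply: respects_wext => [x|x y xy]; first by rewrite replace1_linv.
case: (eqVneq x.1 b.1) => xb; first exact: replace1_comm_b.
case: (eqVneq y.1 b.1) => yb.
  by apply: we_sym; apply: replace1_comm_b; rewrite // adj_sym.
by rewrite (replace1_id xb) (replace1_id yb); apply: (we_comm [::] [::]).
Qed.

End Replacement.

Section Whitehead2.
Variables (V : finType) (adj : rel V).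
Hypotheses (adj_sym : symmetric adj) (adj_irr : irreflexive adj).
Variables (B : {set letter V}) (b a : letter V).
Hypotheses (bB : b \in B) (b'B : linv b \notin B) (aB : a \notin B) (a'B : linv a \notin B).
Hypothesis f_respects : respects adj (whmap B b).
Hypothesis dom : dominates adj a.1 b.1.
Local Notation weq := (wequiv adj).
Local Notation f := (whmap B b).
Local Notation B' := ((B :\ b) :|: [set a]).
Local Notation f' := (whmap B' a).

Lemma vertex_ab : a.1 != b.1.
Proof.
by apply/eqP => /same_vertex [e|e]; move: bB; rewrite e ?(negbTE aB) ?(negbTE a'B).
Qed.

Lemma notin_B'_b x : x.1 = b.1 -> x \notin B'.
Proof.
have ba : b != a by apply: contraNneq vertex_ab => ->.
have b'a : linv b != a by apply: contraNneq vertex_ab => <-.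
rewrite !inE; case/esym/same_vertex => ->.
  by rewrite eqxx (negbTE ba).
by rewrite (negbTE b'a) (negbTE b'B) andbF.
Qed.

Lemma f'_b x : x.1 = b.1 -> f' x = [:: x].
Proof. by move=> xb; apply: whmap_id; apply: notin_B'_b. Qed.

Lemma mem_B' x : x.1 != b.1 -> x.1 != a.1 -> (x \in B') = (x \in B).
Proof.
move=> xb xa; rewrite !inE.
have -> : (x == b) = false by apply: contraNF xb => /eqP ->.
have -> : (x == a) = false by apply: contraNF xa => /eqP ->.
by rewrite orbF.
Qed.

Lemma f'_replace x : x.1 != b.1 -> f' x = map (replace1 b a) (f x).
Proof.
move=> xb; case: (eqVneq x.1 a.1) => xa.
  have [xB x'B] : x \notin B /\ linv x \notin B.
    by case/esym/same_vertex: xa => ->; rewrite ?linvK.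
  by rewrite (whmap_fix _ xa) (whmap_id _ xB x'B) /= replace1_id.
rewrite (whmap_other _ xa) (whmap_other _ xb) !mem_B' // map_cat /= replace1_id //.
by case: (linv x \in B); case: (x \in B); rewrite /= /replace1 ?eqxx ?(negbTE (linv_neq b)).
Qed.

Lemma mem_B_lk_a y : ~~ adj a.1 b.1 -> adj a.1 y.1 -> (linv y \in B) = (y \in B).
Proof.
move=> nab ay; have yb : y.1 != b.1 by apply: contraNneq nab => <-.
have := f_respects (we_comm [::] [::] ay); rewrite /wext /= !cats0 (whmap_id _ aB a'B)
  (whmap_other _ yb).
have noncomm := not_wequiv_comm adj_sym vertex_ab nab (x := a).
have ya : adj y.1 a.1 by rewrite adj_sym.
case: (linv y \in B); case: (y \in B) => //= e.
- case: (noncomm (linv b) erefl erefl); apply: (wequiv_cancelr (s := [:: y])).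
  exact: we_trans e (we_comm [:: linv b] [::] ya).
- case: (noncomm b erefl erefl); apply: (wequiv_cancell (p := [:: y])).
  exact: we_trans (we_comm [::] [:: b] ya) e.
Qed.

Lemma f'_lk_a y : ~~ adj a.1 b.1 -> adj a.1 y.1 -> weq (f' y) [:: y].
Proof.
move=> nab ay; have yb : y.1 != b.1 by apply: contraNneq nab => <-.
rewrite f'_replace // (whmap_other _ yb) (mem_B_lk_a nab ay) map_cat /= replace1_id //.
case: (y \in B); rewrite /= /replace1 ?eqxx ?(negbTE (linv_neq b)); last exact: we_refl.
apply: we_trans (we_comm [::] [:: a] (ay : adj (linv a).1 y.1)) _.
by move: (we_cancel adj [:: y] [::] (linv a)); rewrite linvK.
Qed.

Lemma f'_comm_b x y : adj x.1 y.1 -> x.1 = b.1 -> weq (f' x ++ f' y) (f' y ++ f' x).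
Proof.
move=> xy xb; rewrite (f'_b xb) /=.
case: (boolP (adj a.1 b.1)) => [ab|nab].
  apply: wequiv_comm_word => z /whmap_vertex [->|->] //.
  by rewrite xb adj_sym.
case: (eqVneq y.1 a.1) => [ya|ya].
  by rewrite (whmap_fix _ ya); apply: (we_comm [::] [::]).
have ay : adj a.1 y.1 by move: (xy); rewrite xb => /dom; rewrite (negbTE ya) orbF.
have e := f'_lk_a nab ay.
apply: we_trans (wequiv_cat (w1 := [:: x]) (we_refl adj _) e) _.
apply: we_trans (we_comm [::] [::] xy) _.
exact: wequiv_cat (we_sym e) (we_refl adj [:: x]).
Qed.

Lemma f'_respects : respects adj f'.
Proof.
apply: respects_wext => [x|x y xy]; first exact: whmap_linv.
case: (eqVneq x.1 b.1) => xb; first exact: f'_comm_b.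
case: (eqVneq y.1 b.1) => yb.
  by apply: we_sym; apply: f'_comm_b; rewrite // adj_sym.
rewrite !f'_replace // -!map_cat -!wext_letter; apply: (replace1_respects adj_sym adj_irr dom).
by move: (f_respects (we_comm [::] [::] xy)); rewrite /wext /= !cats0.
Qed.

Lemma f'_replace_word w : ~~ occurs b.1 w -> wext f' w = replace_letter b a (wext f w).
Proof.
move=> wb; rewrite /replace_letter /wext map_flatten -map_comp; congr flatten.
apply/eq_in_map => x xw /=; apply: f'_replace.
by apply: contraNneq wb => <-; apply: map_f.
Qed.

Lemma replace_letter_repr (R : word V -> word V -> Prop) :
  (forall w1 w2, R w1 w2 -> R w2 w1) ->
  (forall w1 w2 w3, R w1 w2 -> R w2 w3 -> R w1 w3) ->
  (forall g, (forall x, g (linv x) = winv (g x)) -> respects adj g ->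
     forall w1 w2, R w1 w2 -> R (wext g w1) (wext g w2)) ->
  forall u v w, R w u -> ~~ occurs b.1 w -> R v (wext f u) ->
  R (replace_letter b a v) (wext f' u).
Proof.
move=> Rsym Rtr Rwext u v w wu wb vu.
have rV x : [:: replace1 b a (linv x)] = winv [:: replace1 b a x].
  by rewrite replace1_linv.
have rR := replace1_respects adj_sym adj_irr dom.
apply: (Rtr _ _ _ _ (Rwext _ (whmap_linv B' a) f'_respects _ _ wu)).
rewrite f'_replace_word // !replace_letterE.
apply: (Rtr _ _ _ (Rwext _ rV rR _ _ vu)); apply: Rsym.
exact: Rwext rV rR _ _ (Rwext _ (whmap_linv B b) f_respects _ _ wu).
Qed.

End Whitehead2.

Theorem mainTheorem17 (V : finType) (adj : rel V)
  (adj_sym : symmetric adj) (adj_irr : irreflexive adj)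
  (B : {set letter V}) (b a : letter V) :
  whitehead2 adj B b ->
  dominates adj a.1 b.1 ->
  a \notin B -> linv a \notin B ->
  (forall u v : word V,
     ~ supp_el adj u b.1 ->
     greduced adj v ->
     wequiv adj v (wext (whmap B b) u) ->
     wequiv adj (replace_letter b a v)
                (wext (whmap ((B :\ b) :|: [set a]) a) u))
  /\
  (forall u v : word V,
     ~ supp_cl adj u b.1 ->
     cgreduced adj v ->
     wconj adj v (wext (whmap B b) u) ->
     wconj adj (replace_letter b a v)
               (wext (whmap ((B :\ b) :|: [set a]) a) u)).
Proof.
case=> bB b'B [f_respects _] dom aB a'B.
have repr := replace_letter_repr adj_sym adj_irr bB b'B aB a'B f_respects dom.
split=> u v nsupp _.
- have [w [wu wmin]] := exists_shortest_repr (we_refl adj u) (@we_trans _ adj).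
  apply: (repr _ (@we_sym _ adj) (@we_trans _ adj) _ u v w wu) => [g _ gR|].
    exact: gR.
  by apply/negP => wb; apply: nsupp; exists w.
- have [w [wu wmin]] := exists_shortest_repr (wconj_refl adj u) (@wconj_trans _ adj).
  apply: (repr _ (@wconj_sym _ adj) (@wconj_trans _ adj) _ u v w wu).
    by move=> g gV gR w1 w2; apply: wconj_wext.
  by apply/negP => wb; apply: nsupp; exists w.
Qed.
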